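(* (1) Let $h_i:(\mathbb{R}^{n_i},0)\to(\mathbb{R}^{n_i},0)$, $i=1,2$, be homeomorphism germs. Both $h_1$ and $h_2$ are (SSP) bi-Lipschitz homeomorphisms if and only if $h_1\times h_2:(\mathbb{R}^{n_1}\times\mathbb{R}^{n_2},(0,0))\to(\mathbb{R}^{n_1}\times\mathbb{R}^{n_2},(0,0))$ is an (SSP) bi-Lipschitz homeomorphism. (2) Let $h:(\mathbb{R}^n,0)\to(\mathbb{R}^n,0)$ be a bi-Lipschitz homeomorphism germ. Then $I_n\times h:(\mathbb{R}^n\times\mathbb{R}^n,(0,0))\to(\mathbb{R}^n\times\mathbb{R}^n,(0,0))$ (or $I_n\times h^{-1}$) satisfies condition semiline-(SSP) if and only if $I_n\times h$ is an (SSP) map. (3) Let $h:(\mathbb{R}^n,0)\to(\mathbb{R}^n,0)$ be a bi-Lipschitz homeomorphism germ. Then $h$ is an (SSP) map if and only if $I_n\times h$ (or $I_n\times h^{-1}$) satisfies condition semiline-(SSP). Here $I_n$ denotes the identity map of $\mathbb{R}^n$.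
   Context: For a set-germ $A\subset\mathbb{R}^k$ at $0$ with $0\in\overline A$, $D(A)=\{a\in S^{k-1}:\exists\, x_i\in A\setminus\{0\},\ x_i\to0,\ x_i/\|x_i\|\to a\}$. For sequences, $\|u_m\|\ll\|v_m\|,\|w_m\|$ means $\|u_m\|/\|v_m\|\to0$ and $\|u_m\|/\|w_m\|\to0$. $A$ satisfies condition (SSP) if for every sequence $a_m\in\mathbb{R}^k$ tending to $0$ with $\lim a_m/\|a_m\|\in D(A)$ there is a sequence $b_m\in A$ with $\|a_m-b_m\|\ll\|a_m\|,\|b_m\|$. A map germ $h:(\mathbb{R}^k,0)\to(\mathbb{R}^k,0)$ is an (SSP) map if its graph $\{(x,h(x))\}\subset\mathbb{R}^k\times\mathbb{R}^k$ satisfies condition (SSP) at $(0,0)$. A bi-Lipschitz homeomorphism germ is a homeomorphism germ $h$ with $h(0)=0$ and constants $0<K_1\le K_2$ with $K_1\|x-y\|\le\|h(x)-h(y)\|\le K_2\|x-y\|$ near $0$; an (SSP) bi-Lipschitz homeomorphism is one which is also an (SSP) map. A semiline is a set $\{ta:t\ge0\}$ with $a$ a unit vector; a homeomorphism germ $g$ satisfies condition semiline-(SSP) if $D(g(\ell))$ is a single point for every semiline $\ell$. *)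

(* R^k is modelled as 'rV[R]_k with the
   Euclidean norm [enorm]; R^k x R^k is 'rV[R]_(k + k) via row_mx. *)
From HB Require Import structures.
From mathcomp Require Import all_boot all_order all_algebra.
From mathcomp Require Import all_classical all_reals all_analysis.
Set Implicit Arguments. Unset Strict Implicit. Unset Printing Implicit Defensive.
Import Order.TTheory GRing.Theory Num.Theory.
Import numFieldNormedType.Exports.
Local Open Scope classical_set_scope.
Local Open Scope ring_scope.

Section Defs.
Variable R : realType.

Definition enorm (k : nat) (x : 'rV[R]_k) : R :=
  Num.sqrt (\sum_(i < k) (x ord0 i) ^+ 2).

Definition tends0 (k : nat) (x : nat -> 'rV[R]_k) : Prop :=
  (fun m => enorm (x m)) @ \oo --> (0 : R).

Definition dir_tends (k : nat) (x : nat -> 'rV[R]_k) (a : 'rV[R]_k) : Prop :=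
  (fun m => enorm ((enorm (x m))^-1 *: x m - a)) @ \oo --> (0 : R).

Definition Dir (k : nat) (A : set 'rV[R]_k) : set 'rV[R]_k :=
  [set a | enorm a = 1 /\
     exists x : nat -> 'rV[R]_k,
       (forall i, A (x i) /\ x i <> 0) /\ tends0 x /\ dir_tends x a].

Definition negligible (k : nat) (u v : nat -> 'rV[R]_k) : Prop :=
  (fun m => enorm (u m) / enorm (v m)) @ \oo --> (0 : R).

Definition SSP (k : nat) (A : set 'rV[R]_k) : Prop :=
  forall a : nat -> 'rV[R]_k,
    tends0 a -> (exists2 d, Dir A d & dir_tends a d) ->
    exists b : nat -> 'rV[R]_k,
      (forall m, A (b m)) /\
      negligible (fun m => a m - b m) a /\ negligible (fun m => a m - b m) b.

Definition graph (k : nat) (h : 'rV[R]_k -> 'rV[R]_k) : set 'rV[R]_(k + k) :=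
  range (fun x => row_mx x (h x)).

Definition SSP_map (k : nat) (h : 'rV[R]_k -> 'rV[R]_k) : Prop := SSP (graph h).

(* g is (a representative of) the inverse germ of the homeomorphism germ h:
   h : U -> V and g : V -> U are mutually inverse continuous maps between
   open neighbourhoods U, V of 0, and h 0 = 0. *)
Definition homeo_germ_inv (k : nat) (h g : 'rV[R]_k -> 'rV[R]_k) : Prop :=
  h 0 = 0 /\
  exists U V : set 'rV[R]_k,
    [/\ open U, open V, U 0 & V 0] /\
    [/\ forall x, U x -> V (h x) /\ g (h x) = x,
        forall y, V y -> U (g y) /\ h (g y) = y,
        {within U, continuous h} & {within V, continuous g}].

Definition homeo_germ (k : nat) (h : 'rV[R]_k -> 'rV[R]_k) : Prop :=
  exists g, homeo_germ_inv h g.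

Definition bilipschitz (k : nat) (h : 'rV[R]_k -> 'rV[R]_k) : Prop :=
  h 0 = 0 /\
  exists r K1 K2 : R, [/\ 0 < r, 0 < K1, K1 <= K2 &
    forall x y, enorm x < r -> enorm y < r ->
      K1 * enorm (x - y) <= enorm (h x - h y) <= K2 * enorm (x - y)].

Definition bilip_homeo (k : nat) (h : 'rV[R]_k -> 'rV[R]_k) : Prop :=
  homeo_germ h /\ bilipschitz h.

Definition SSP_bilip_homeo (k : nat) (h : 'rV[R]_k -> 'rV[R]_k) : Prop :=
  bilip_homeo h /\ SSP_map h.

Definition semiline (k : nat) (a : 'rV[R]_k) : set 'rV[R]_k :=
  [set t *: a | t in [set t : R | 0 <= t]].

Definition eball0 (k : nat) (r : R) : set 'rV[R]_k := [set x | enorm x < r].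

(* semiline-(SSP): D(g(l)) is a single point for every semiline l; as a germ
   notion, g(l) is taken as g(l ∩ B(0,r)) for all sufficiently small r > 0. *)
Definition semiline_SSP (k : nat) (g : 'rV[R]_k -> 'rV[R]_k) : Prop :=
  exists2 r0 : R, 0 < r0 &
    forall r : R, 0 < r -> r <= r0 ->
    forall a : 'rV[R]_k, enorm a = 1 ->
      exists d, Dir (g @` (semiline a `&` eball0 r)) = [set d].

Definition prod_map (n1 n2 : nat) (h1 : 'rV[R]_n1 -> 'rV[R]_n1)
  (h2 : 'rV[R]_n2 -> 'rV[R]_n2) : 'rV[R]_(n1 + n2) -> 'rV[R]_(n1 + n2) :=
  fun z => row_mx (h1 (lsubmx z)) (h2 (rsubmx z)).

End Defs.

(* Write g_t(v) = t^-1 g(t v). Everything reduces to one property of a germ g with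
   g(0) = 0, [radial_cauchy g]: for every v, g_t(v) is Cauchy as t -> 0+, i.e. g has
   one-sided directional derivatives at 0. For Lipschitz g the rescalings g_t(v) are
   bounded, so by Bolzano-Weierstrass this amounts to the uniqueness of their
   subsequential limits.
   - For Lipschitz h, the limit directions of the graph of h are the directions of the
     points (p, q) with q a subsequential limit of h_t(p). (SSP) at such a direction
     forces all these limits to coincide; conversely, when they do, a sequence tending
     to such a direction is matched by the graph points over its first component.
   - For bi-Lipschitz g, I x g maps the semiline through a = (a1, a2) onto the points
     t (a1, g_t(a2)); the lower Lipschitz bound keeps (a1, g_t(a2)) away from 0, so the
     limit directions of the image are those of (a1, w), w a limit of g_t(a2). Hence
     semiline-(SSP) of I x g is again [radial_cauchy g].
   - [radial_cauchy] splits over products, holds for the identity and passes to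
     bi-Lipschitz inverses, as (h^-1)_t is inverse to h_t near 0.
   Bi-Lipschitz homeomorphism germs being stable under products, factors and inverses,
   the three statements follow. *)

From Pilot Require Import Defs.
From HB Require Import structures.
From mathcomp Require Import all_boot all_order all_algebra.
From mathcomp Require Import all_classical all_reals all_analysis.
From mathcomp Require Import ring lra.
Set Implicit Arguments. Unset Strict Implicit. Unset Printing Implicit Defensive.
Import Order.TTheory GRing.Theory Num.Theory.
Import numFieldNormedType.Exports.
Local Open Scope classical_set_scope.
Local Open Scope ring_scope.

Section EuclideanNorm.
Variable R : realType.
Implicit Types (a b c : R).

Lemma le_sqr_nneg a b : 0 <= b -> a ^+ 2 <= b ^+ 2 -> a <= b.
Proof.
move=> b0 ab; have [a0|a0] := leP 0 a; last exact: le_trans (ltW a0) b0.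
by rewrite -ler_sqr ?nnegrE.
Qed.

Lemma hypot_sandwich (a b x1 x2 y1 y2 x y : R) :
  0 <= a -> 0 <= b -> 0 <= x1 -> 0 <= x2 -> 0 <= x -> 0 <= y ->
  a * x1 <= y1 <= b * x1 -> a * x2 <= y2 <= b * x2 ->
  x ^+ 2 = x1 ^+ 2 + x2 ^+ 2 -> y ^+ 2 = y1 ^+ 2 + y2 ^+ 2 -> a * x <= y <= b * x.
Proof.
move=> a0 b0 x10 x20 x0 y0 /andP[l1 u1] /andP[l2 u2] ex ey.
have sqr_le (c d : R) : 0 <= c -> c <= d -> c ^+ 2 <= d ^+ 2.
  by move=> c0 cd; rewrite ler_sqr ?nnegrE ?(le_trans c0 cd).
have := sqr_le _ _ (mulr_ge0 a0 x10) l1; have := sqr_le _ _ (mulr_ge0 a0 x20) l2.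
have := sqr_le _ _ (le_trans (mulr_ge0 a0 x10) l1) u1.
have := sqr_le _ _ (le_trans (mulr_ge0 a0 x20) l2) u2.
rewrite !exprMn => ? ? ? ?.
by apply/andP; split; apply: le_sqr_nneg; rewrite ?mulr_ge0 // exprMn ey ex; nra.
Qed.

Lemma enorm_ge0 k (x : 'rV[R]_k) : 0 <= enorm x.
Proof. exact: sqrtr_ge0. Qed.

Lemma enorm_sqr k (x : 'rV[R]_k) : enorm x ^+ 2 = \sum_(i < k) x ord0 i ^+ 2.
Proof. by rewrite sqr_sqrtr // sumr_ge0 // => i _; apply: sqr_ge0. Qed.

Lemma enorm0 k : enorm (0 : 'rV[R]_k) = 0.
Proof. by rewrite /enorm big1 ?sqrtr0 // => i _; rewrite mxE expr0n. Qed.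

Lemma enorm_eq0 k (x : 'rV[R]_k) : enorm x = 0 -> x = 0.
Proof.
move=> x0; have /eqP : enorm x ^+ 2 = 0 by rewrite x0 expr0n.
rewrite enorm_sqr psumr_eq0 => [/allP xi0|i _]; last exact: sqr_ge0.
apply/rowP => i; rewrite mxE.
by have /implyP/(_ isT) := xi0 i (mem_index_enum i); rewrite sqrf_eq0 => /eqP.
Qed.

Lemma enorm_gt0 k (x : 'rV[R]_k) : x != 0 -> 0 < enorm x.
Proof.
by move=> x0; rewrite lt_def enorm_ge0 andbT; apply: contra x0 => /eqP/enorm_eq0->.
Qed.

Lemma enormZ k c (x : 'rV[R]_k) : enorm (c *: x) = `|c| * enorm x.
Proof.
rewrite /enorm -sqrtr_sqr -sqrtrM ?sqr_ge0 // mulr_sumr.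
by congr Num.sqrt; apply: eq_bigr => i _; rewrite mxE exprMn.
Qed.

Lemma enormN k (x : 'rV[R]_k) : enorm (- x) = enorm x.
Proof. by rewrite -scaleN1r enormZ normrN1 mul1r. Qed.

Lemma enormB k (x y : 'rV[R]_k) : enorm (x - y) = enorm (y - x).
Proof. by rewrite -enormN opprB. Qed.

Definition normalize k (x : 'rV[R]_k) := (enorm x)^-1 *: x.

Lemma enorm_normalize k (x : 'rV[R]_k) : x != 0 -> enorm (normalize x) = 1.
Proof.
move=> /enorm_gt0 x0; rewrite enormZ ger0_norm ?invr_ge0 ?(ltW x0) //.
by rewrite mulVf ?gt_eqF.
Qed.

Lemma normalizeZ k c (x : 'rV[R]_k) : 0 < c -> normalize (c *: x) = normalize x.
Proof.
move=> c0; rewrite /normalize enormZ gtr0_norm // scalerA invfM mulrAC.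
by rewrite mulVf ?gt_eqF // mul1r.
Qed.

Lemma enorm_coord k (x : 'rV[R]_k) i : `|x ord0 i| <= enorm x.
Proof.
apply: le_sqr_nneg; first exact: enorm_ge0.
rewrite enorm_sqr real_normK ?num_real // (bigD1 i) //= lerDl.
by apply: sumr_ge0 => j _; apply: sqr_ge0.
Qed.

Lemma enorm_le_coord k (x : 'rV[R]_k) c :
  (forall i, `|x ord0 i| <= c) -> enorm x <= k%:R * c.
Proof.
case: k x => [|k] x xc; first by rewrite /enorm big_ord0 sqrtr0 mul0r.
have c0 : 0 <= c := le_trans (normr_ge0 _) (xc ord0).
apply: le_sqr_nneg; first by rewrite mulr_ge0.
rewrite enorm_sqr (@le_trans _ _ (\sum_(i < k.+1) c ^+ 2)) //.
  apply: ler_sum => i _; rewrite -real_normK ?num_real //.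
  by rewrite ler_sqr ?nnegrE.
rewrite sumr_const card_ord -mulr_natr.
have k1 : 1 <= k.+1%:R :> R by rewrite ler1n.
by have := sqr_ge0 c; set K := k.+1%:R; nra.
Qed.

Lemma cauchy_schwarz k (x y : 'rV[R]_k) :
  \sum_(i < k) x ord0 i * y ord0 i <= enorm x * enorm y.
Proof.
set P := \sum_(i < k) _.
have expand a b : \sum_(i < k) (a * x ord0 i - b * y ord0 i) ^+ 2 =
    a ^+ 2 * enorm x ^+ 2 - 2 * a * b * P + b ^+ 2 * enorm y ^+ 2.
  rewrite !enorm_sqr /P !mulr_sumr -sumrB -big_split /=.
  by apply: eq_bigr => i _; ring.
have : 0 <= \sum_(i < k) (enorm y * x ord0 i - enorm x * y ord0 i) ^+ 2.
  by apply: sumr_ge0 => i _; apply: sqr_ge0.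
rewrite expand => sqr_sum_ge0.
have [/eqP|ab0] := eqVneq (enorm y * enorm x) 0.
  rewrite mulf_eq0 => /orP[] /eqP/enorm_eq0 x0; rewrite /P big1 ?mulr_ge0 ?enorm_ge0 //.
    by move=> i _; rewrite x0 mxE mulr0.
  by move=> i _; rewrite x0 mxE mul0r.
have abp : 0 < enorm y * enorm x by rewrite lt_def ab0 mulr_ge0 ?enorm_ge0.
nra.
Qed.

Lemma enormD k (x y : 'rV[R]_k) : enorm (x + y) <= enorm x + enorm y.
Proof.
apply: le_sqr_nneg; first by rewrite addr_ge0 ?enorm_ge0.
have -> : enorm (x + y) ^+ 2 =
    enorm x ^+ 2 + 2 * \sum_(i < k) x ord0 i * y ord0 i + enorm y ^+ 2.
  rewrite !enorm_sqr mulr_sumr -!big_split /=; apply: eq_bigr => i _.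
  by rewrite mxE; ring.
by have := cauchy_schwarz x y; rewrite sqrrD; lra.
Qed.

Lemma enorm_lerB k (x y : 'rV[R]_k) : enorm x - enorm y <= enorm (x - y).
Proof. by have := enormD (x - y) y; rewrite subrK; lra. Qed.

Lemma enorm_row_mx_sqr n1 n2 (x : 'rV[R]_n1) (y : 'rV[R]_n2) :
  enorm (row_mx x y) ^+ 2 = enorm x ^+ 2 + enorm y ^+ 2.
Proof.
rewrite !enorm_sqr big_split_ord /=.
by congr (_ + _); apply: eq_bigr => i _; rewrite ?row_mxEl ?row_mxEr.
Qed.

Lemma enorm_hsubmx_sqr n1 n2 (x : 'rV[R]_(n1 + n2)) :
  enorm x ^+ 2 = enorm (lsubmx x) ^+ 2 + enorm (rsubmx x) ^+ 2.
Proof. by rewrite -{1}(hsubmxK x) enorm_row_mx_sqr. Qed.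

Lemma enorm_row_mxl n1 n2 (x : 'rV[R]_n1) (y : 'rV[R]_n2) :
  enorm x <= enorm (row_mx x y).
Proof.
by apply: le_sqr_nneg; rewrite ?enorm_ge0 // enorm_row_mx_sqr lerDl sqr_ge0.
Qed.

Lemma enorm_row_mxr n1 n2 (x : 'rV[R]_n1) (y : 'rV[R]_n2) :
  enorm y <= enorm (row_mx x y).
Proof.
by apply: le_sqr_nneg; rewrite ?enorm_ge0 // enorm_row_mx_sqr lerDr sqr_ge0.
Qed.

Lemma enorm_row_mx_le n1 n2 (x : 'rV[R]_n1) (y : 'rV[R]_n2) :
  enorm (row_mx x y) <= enorm x + enorm y.
Proof.
apply: le_sqr_nneg; first by rewrite addr_ge0 ?enorm_ge0.
by rewrite enorm_row_mx_sqr; have := enorm_ge0 x; have := enorm_ge0 y; nra.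
Qed.

Lemma enorm_row_mx0l n1 n2 (y : 'rV[R]_n2) :
  enorm (row_mx (0 : 'rV[R]_n1) y) = enorm y.
Proof.
apply/eqP; rewrite eq_le enorm_row_mxr andbT.
by have := enorm_row_mx_le (0 : 'rV[R]_n1) y; rewrite enorm0 add0r.
Qed.

Lemma enorm_row_mx0r n1 n2 (x : 'rV[R]_n1) :
  enorm (row_mx x (0 : 'rV[R]_n2)) = enorm x.
Proof.
apply/eqP; rewrite eq_le enorm_row_mxl andbT.
by have := enorm_row_mx_le x (0 : 'rV[R]_n2); rewrite enorm0 addr0.
Qed.

Lemma enorm_lsubmx n1 n2 (x : 'rV[R]_(n1 + n2)) : enorm (lsubmx x) <= enorm x.
Proof. by rewrite -{2}(hsubmxK x) enorm_row_mxl. Qed.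

Lemma enorm_rsubmx n1 n2 (x : 'rV[R]_(n1 + n2)) : enorm (rsubmx x) <= enorm x.
Proof. by rewrite -{2}(hsubmxK x) enorm_row_mxr. Qed.

Lemma row_mx_neq0l n1 n2 (x : 'rV[R]_n1) (y : 'rV[R]_n2) : x != 0 -> row_mx x y != 0.
Proof. by apply: contra => /eqP xy0; rewrite -(row_mxKl x y) xy0 linear0. Qed.

End EuclideanNorm.

Section Sequences.
Variable R : realType.
Implicit Types (u v : nat -> R) (f g : nat -> nat).

Definition nullseq u :=
  forall e : R, 0 < e -> exists N, forall m, (N <= m)%N -> `|u m| < e.

Lemma nullseqP u : u @ \oo --> (0 : R) <-> nullseq u.
Proof.
split=> [/cvgrPdist_lt u0 e e0|u0].
  by have [N _ uN] := u0 e e0; exists N => m /uN; rewrite sub0r normrN.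
apply/cvgrPdist_lt => e /u0[N uN].
by exists N => // m /uN; rewrite sub0r normrN.
Qed.

Lemma leq_homo_ltn f : {homo f : m n / (m < n)%N} -> forall m, (m <= f m)%N.
Proof. by move=> f_incr; elim=> // m IHm; apply: leq_ltn_trans IHm (f_incr _ _ _). Qed.

Lemma nullseq_sub u f : {homo f : m n / (m < n)%N} -> nullseq u -> nullseq (u \o f).
Proof.
move=> f_incr u0 e /u0[N uN]; exists N => m Nm.
by apply: uN; apply: leq_trans Nm (leq_homo_ltn f_incr m).
Qed.

Lemma nullseq_le u v :
  (exists N, forall m, (N <= m)%N -> `|u m| <= `|v m|) -> nullseq v -> nullseq u.
Proof.
move=> [N0 uv] v0 e /v0[N vN]; exists (maxn N0 N) => m; rewrite geq_max => /andP[N0m Nm].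
exact: le_lt_trans (uv _ N0m) (vN _ Nm).
Qed.

Lemma nullseq_lew u v : (forall m, `|u m| <= `|v m|) -> nullseq v -> nullseq u.
Proof. by move=> uv; apply: nullseq_le; exists 0%N. Qed.

Lemma nullseqD u v : nullseq u -> nullseq v -> nullseq (fun m => u m + v m).
Proof.
move=> u0 v0 e e0; have e20 : 0 < e / 2 by rewrite divr_gt0.
have [N1 uN] := u0 _ e20; have [N2 vN] := v0 _ e20.
exists (maxn N1 N2) => m; rewrite geq_max => /andP[/uN ? /vN ?].
by have := ler_normD (u m) (v m); lra.
Qed.

Lemma nullseqZ u c : nullseq u -> nullseq (fun m => c * u m).
Proof.
move=> u0 e e0; have c0 : 0 < `|c| + 1 by rewrite ltr_wpDl.
have [N uN] := u0 _ (divr_gt0 e0 c0); exists N => m /uN.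
rewrite normrM ltr_pdivlMr // => ue; apply: le_lt_trans ue.
by rewrite mulrC ler_wpM2l // lerDl.
Qed.

Lemma nullseqM u v M : (forall m, `|v m| <= M) -> nullseq u -> nullseq (fun m => u m * v m).
Proof.
move=> vM u0; apply: nullseq_lew (nullseqZ M u0) => m.
rewrite !normrM mulrC ler_wpM2r //; exact: le_trans (vM m) (ler_norm _).
Qed.

Lemma nullseq_lt u e : nullseq u -> 0 < e -> exists N, forall m, (N <= m)%N -> u m < e.
Proof. by move=> u0 /u0[N uN]; exists N => m /uN; apply: le_lt_trans (ler_norm _). Qed.

Lemma nullseq_inv_nat c : nullseq (fun m => c / m.+1%:R).
Proof.
move=> e e0; have [N cN] : exists N : nat, `|c| / e < N%:R.
  by exists (Num.truncn (`|c| / e)).+1; apply: truncnS_gt.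
exists N => m Nm; rewrite normrM normfV normr_nat ltr_pdivrMr // mulrC -ltr_pdivrMr //.
by apply: lt_le_trans cN _; rewrite ler_nat (leq_trans Nm).
Qed.

Lemma not_nullseq u : ~ nullseq u ->
  exists e, 0 < e /\ exists2 f, {homo f : m n / (m < n)%N} & forall m, e <= `|u (f m)|.
Proof.
move=> u_not0.
have [e [e0 ue]] : exists e, 0 < e /\ forall N, exists m, (N <= m)%N /\ e <= `|u m|.
  apply: contra_notP u_not0 => u_small e e0.
  apply: contra_notP u_small => u_large; exists e; split => // N.
  apply: contra_notP u_large => uN; exists N => m Nm.
  by rewrite ltNge; apply/negP => em; apply: uN; exists m.
have [g gP] := choice ue.
pose f := fix f m := if m is m'.+1 then g (f m').+1 else g 0%N.
exists e; split => //; exists f; last by case=> [|m]; apply: (gP _).2.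
by apply: homo_ltn => [|m]; [apply: ltn_trans | apply: (gP _).1].
Qed.

Lemma bolzano_weierstrass_real u M : (forall m, `|u m| <= M) ->
  exists f l, {homo f : m n / (m < n)%N} /\ nullseq (fun m => u (f m) - l).
Proof.
move=> uM; have u_bnd : bounded_fun u.
  by exists M; split; [apply: num_real | move=> x Mx y _; apply: le_trans (uM y) (ltW Mx)].
have [f /increasing_seqP f_incr /cvg_ex[l /cvgrPdist_lt ufl]] := bolzano_weierstrass u_bnd.
exists f, l; split; first exact: homo_ltn ltn_trans f_incr.
move=> e /ufl[N _ uN]; exists N => m /uN; by rewrite distrC.
Qed.

End Sequences.

Section VectorSequences.
Variable R : realType.
Variable k : nat.
Implicit Types (u v : nat -> 'rV[R]_k) (l p : 'rV[R]_k).

Definition vlim u l := nullseq (fun m => enorm (u m - l)).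

Lemma vlim0 u : vlim u 0 <-> nullseq (fun m => enorm (u m)).
Proof. by rewrite /vlim; under eq_fun do rewrite subr0. Qed.

Lemma eq_vlim u v l : (exists N, forall m, (N <= m)%N -> u m = v m) -> vlim v l -> vlim u l.
Proof. by move=> [N uv]; apply: nullseq_le; exists N => m /uv->. Qed.

Lemma eq_vlimW u v l : (forall m, u m = v m) -> vlim v l -> vlim u l.
Proof. by move=> uv; apply: eq_vlim; exists 0%N. Qed.

Lemma vlim_cst l : vlim (fun=> l) l.
Proof. by move=> e e0; exists 0%N => m _; rewrite subrr enorm0 normr0. Qed.

Lemma vlim_sub u l f : {homo f : m n / (m < n)%N} -> vlim u l -> vlim (u \o f) l.
Proof. exact: nullseq_sub. Qed.

Lemma vlimD u v l p : vlim u l -> vlim v p -> vlim (fun m => u m + v m) (l + p).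
Proof.
move=> ul vp; apply: nullseq_lew (nullseqD ul vp) => m.
rewrite !ger0_norm ?addr_ge0 ?enorm_ge0 // opprD addrACA; exact: enormD.
Qed.

Lemma vlimN u l : vlim u l -> vlim (fun m => - u m) (- l).
Proof. by apply: nullseq_lew => m; rewrite -opprD enormN. Qed.

Lemma vlimB u v l p : vlim u l -> vlim v p -> vlim (fun m => u m - v m) (l - p).
Proof. by move=> ul /vlimN; apply: vlimD. Qed.

Lemma vlim_enorm u l : vlim u l -> nullseq (fun m => enorm (u m) - enorm l).
Proof.
apply: nullseq_lew => m; rewrite [X in _ <= X]ger0_norm ?enorm_ge0 //.
rewrite real_ler_norml ?num_real // enorm_lerB andbT.
by have := enorm_lerB l (u m); rewrite enormB; lra.
Qed.

Lemma vlim_uniq u l p : vlim u l -> vlim u p -> l = p.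
Proof.
move=> ul up; apply/eqP; rewrite -subr_eq0; apply/eqP/enorm_eq0/eqP.
rewrite eq_le enorm_ge0 andbT leNgt; apply/negP => /(nullseqD ul up)[N /(_ N (leqnn N))].
have := enormD (l - u N) (u N - p); rewrite addrA subrK (enormB l).
by rewrite ger0_norm ?addr_ge0 ?enorm_ge0 //; lra.
Qed.

Lemma enorm_vlim_ge u l e :
  vlim u l -> (exists N, forall m, (N <= m)%N -> e <= enorm (u m)) -> e <= enorm l.
Proof.
move=> /vlim_enorm ul [N eu]; rewrite leNgt; apply/negP => le.
have [M uM] := ul (e - enorm l) ltac:(by rewrite subr_gt0).
have := eu (maxn N M) (leq_maxl _ _); have := uM (maxn N M) (leq_maxr _ _).
by rewrite real_ltr_norml ?num_real //; lra.
Qed.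

Lemma bounded_eventually u :
  (exists N M, forall m, (N <= m)%N -> enorm (u m) <= M) ->
  exists M, forall m, enorm (u m) <= M.
Proof.
move=> [N [M uM]]; exists (`|M| + \sum_(i < N) enorm (u i)) => m.
have S0 : 0 <= \sum_(i < N) enorm (u i) by rewrite sumr_ge0 // => i _; apply: enorm_ge0.
have [mN|/uM] := ltnP m N; last by have := ler_norm M; lra.
have : enorm (u m) <= \sum_(i < N) enorm (u i).
  by rewrite (bigD1 (Ordinal mN)) //= lerDl sumr_ge0 // => i _; apply: enorm_ge0.
by have := normr_ge0 M; lra.
Qed.

Lemma vlim_bounded u l : vlim u l -> exists M, forall m, enorm (u m) <= M.
Proof.
move=> /vlim_enorm /(_ 1 ltr01)[N uN]; apply: bounded_eventually.
exists N, (enorm l + 1) => m /uN; rewrite real_ltr_norml ?num_real //; lra.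
Qed.

Lemma vlimZ u l (c : nat -> R) (c0 : R) :
  vlim u l -> nullseq (fun m => c m - c0) -> vlim (fun m => c m *: u m) (c0 *: l).
Proof.
move=> ul cc0; have [M uM] := vlim_bounded ul.
apply: (@nullseq_lew _ _ (fun m => `|c m - c0| * enorm (u m) + `|c0| * enorm (u m - l))).
  move=> m; rewrite ger0_norm ?enorm_ge0 //.
  have -> : c m *: u m - c0 *: l = (c m - c0) *: u m + c0 *: (u m - l).
    by rewrite scalerBl scalerBr addrA subrK.
  by apply: le_trans (enormD _ _) _; rewrite !enormZ ler_norm.
apply: nullseqD; last exact: nullseqZ.
apply: (@nullseqM _ _ _ M) => [m|]; first by rewrite ger0_norm ?enorm_ge0.
by apply: nullseq_lew cc0 => m; rewrite normr_id.
Qed.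

Lemma vlim_normalize u l : vlim u l -> l != 0 ->
  vlim (fun m => normalize (u m)) (normalize l).
Proof.
move=> ul l0; apply: vlimZ => //; have l_gt0 := enorm_gt0 l0.
have [N lN] := vlim_enorm ul (divr_gt0 l_gt0 (ltr0Sn _ 1)).
apply: (@nullseq_le _ _ (fun m => (2 / enorm l ^+ 2) * (enorm (u m) - enorm l))); last first.
  exact/nullseqZ/vlim_enorm.
exists N => m /lN; rewrite real_ltr_norml ?num_real // => /andP[ul1 _].
have um0 : 0 < enorm (u m) by lra.
(* |1/x - 1/l| = |x - l| / (x l) <= 2 |x - l| / l^2 as soon as x >= l/2 *)
rewrite normrM (ger0_norm (_ : 0 <= 2 / enorm l ^+ 2)) ?divr_ge0 ?sqr_ge0 //.
have -> : (enorm (u m))^-1 - (enorm l)^-1 = (enorm l - enorm (u m)) / (enorm (u m) * enorm l).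
  by field; rewrite !gt_eqF.
rewrite normrM normfV (ger0_norm (ltW (mulr_gt0 um0 l_gt0))).
rewrite distrC mulrC; apply: ler_wpM2r; first exact: normr_ge0.
rewrite -subr_ge0.
have -> : 2 / enorm l ^+ 2 - (enorm (u m) * enorm l)^-1 =
    (2 * enorm (u m) - enorm l) / (enorm (u m) * enorm l ^+ 2).
  by field; rewrite !gt_eqF ?exprn_gt0.
by rewrite divr_ge0 ?mulr_ge0 ?sqr_ge0 ?enorm_ge0 //; lra.
Qed.

Lemma vlim_coord u (L : 'I_k -> R) :
  (forall i, nullseq (fun m => u m ord0 i - L i)) -> vlim u (\row_i L i).
Proof.
move=> uL e e0; have k0 : 0 < k%:R + 1 :> R by rewrite ltr_wpDl.
have [N uN] := choice (fun i => uL i _ (divr_gt0 e0 k0)).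
exists (\max_(i < k) N i)%N => m Nm; rewrite ger0_norm ?enorm_ge0 //.
apply: le_lt_trans (enorm_le_coord (c := e / (k%:R + 1)) _) _.
  move=> i; rewrite !mxE ltW // uN // (leq_trans _ Nm) //; exact: leq_bigmax.
by rewrite mulrA ltr_pdivrMr //; lra.
Qed.

Lemma bolzano_weierstrass_row u M : (forall m, enorm (u m) <= M) ->
  exists f l, {homo f : m n / (m < n)%N} /\ vlim (u \o f) l.
Proof.
move=> uM.
have coords j : (j <= k)%N -> exists2 f, {homo f : m n / (m < n)%N} &
    forall i : 'I_k, (i < j)%N -> exists c, nullseq (fun m => u (f m) ord0 i - c).
  elim: j => [_|j IHj jk]; first by exists id => // i; rewrite ltn0.
  have [f f_incr fP] := IHj (ltnW jk).
  have [g [c [g_incr ugc]]] := @bolzano_weierstrass_real R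
    (fun m => u (f m) ord0 (Ordinal jk)) M (fun m => le_trans (enorm_coord _ _) (uM _)).
  exists (f \o g) => [m n mn|i]; first exact/f_incr/g_incr.
  rewrite ltnS leq_eqVlt => /orP[/eqP ij|/fP[c' ufc']].
    by exists c; have -> : i = Ordinal jk by apply: val_inj.
  by exists c'; apply: (@nullseq_sub _ (fun m => u (f m) ord0 i - c')).
have [f f_incr fP] := coords k (leqnn k).
have [L uL] := choice (fun i : 'I_k => fP i (ltn_ord i)).
by exists f, (\row_i L i); split => //; apply: vlim_coord.
Qed.

End VectorSequences.

Section BlockSequences.
Variable R : realType.
Variables n1 n2 : nat.

Lemma vlim_lsubmx (u : nat -> 'rV[R]_(n1 + n2)) l :
  vlim u l -> vlim (fun m => lsubmx (u m)) (lsubmx l).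
Proof.
apply: nullseq_lew => m; rewrite !ger0_norm ?enorm_ge0 // -linearB; exact: enorm_lsubmx.
Qed.

Lemma vlim_rsubmx (u : nat -> 'rV[R]_(n1 + n2)) l :
  vlim u l -> vlim (fun m => rsubmx (u m)) (rsubmx l).
Proof.
apply: nullseq_lew => m; rewrite !ger0_norm ?enorm_ge0 // -linearB; exact: enorm_rsubmx.
Qed.

Lemma vlim_row_mx (u : nat -> 'rV[R]_n1) (v : nat -> 'rV[R]_n2) l p :
  vlim u l -> vlim v p -> vlim (fun m => row_mx (u m) (v m)) (row_mx l p).
Proof.
move=> ul vp; apply: nullseq_lew (nullseqD ul vp) => m.
rewrite !ger0_norm ?addr_ge0 ?enorm_ge0 // opp_row_mx add_row_mx.
exact: enorm_row_mx_le.
Qed.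

End BlockSequences.

Section Rescaling.
Variable R : realType.
Variable k : nat.
Implicit Types (g : 'rV[R]_k -> 'rV[R]_k) (s t : nat -> R) (v w : 'rV[R]_k).

Definition pos_nullseq s := (forall m, 0 < s m) /\ nullseq s.

Lemma pos_nullseq_sub s f : {homo f : m n / (m < n)%N} ->
  pos_nullseq s -> pos_nullseq (s \o f).
Proof. by move=> f_incr [s0 s_null]; split=> [m|]; [apply: s0 | apply: nullseq_sub]. Qed.

Definition rescale g (t : R) v := t^-1 *: g (t *: v).

Lemma rescaleK g (t : R) v : 0 < t -> rescale g t (t^-1 *: v) = t^-1 *: g v.
Proof. by move=> t0; rewrite /rescale scalerA mulfV ?gt_eqF // scale1r. Qed.

Definition lip_germ g (r K : R) :=
  [/\ g 0 = 0, 0 < r, 0 <= K & forall x y, enorm x < r -> enorm y < r ->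
    enorm (g x - g y) <= K * enorm (x - y)].

Definition bilip_germ g (r K1 K2 : R) :=
  [/\ g 0 = 0, 0 < r, 0 < K1, K1 <= K2 & forall x y, enorm x < r -> enorm y < r ->
    K1 * enorm (x - y) <= enorm (g x - g y) <= K2 * enorm (x - y)].

Lemma bilipschitzP g : bilipschitz g <-> exists r K1 K2, bilip_germ g r K1 K2.
Proof.
split=> [[g0 [r [K1 [K2 [r0 K10 K12 gK]]]]]|[r [K1 [K2 [g0 r0 K10 K12 gK]]]]].
  by exists r, K1, K2.
by split=> //; exists r, K1, K2.
Qed.

Lemma bilip_germ_lip g r K1 K2 : bilip_germ g r K1 K2 -> lip_germ g r K2.
Proof.
move=> [g0 r0 K10 K12 gK]; split=> // [|x y xr yr]; first exact: le_trans (ltW K10) K12.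
by have /andP[] := gK x y xr yr.
Qed.

Lemma lip_germ_id (r : R) : 0 < r -> lip_germ id r 1.
Proof. by move=> r0; split => // x y _ _; rewrite mul1r. Qed.

Lemma pos_nullseq_lt (r : R) : 0 < r -> exists2 s, pos_nullseq s & forall m, s m < r.
Proof.
move=> r0; exists (fun m => r / 2 / m.+1%:R) => [|m].
  by split=> [m|]; [rewrite !divr_gt0 | apply: nullseq_inv_nat].
rewrite ltr_pdivrMr // (@lt_le_trans _ _ r) ?ltr_pdivrMr ?ltr_pMr ?ltr1n //.
by rewrite ler_peMr ?ler1n // ltW.
Qed.

Lemma nullseq_mulr_lt s (c r : R) : nullseq s -> 0 < r ->
  exists N, forall m, (N <= m)%N -> s m * c < r.
Proof.
move=> s_null /(nullseq_lt (nullseqZ c s_null))[N sN].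
by exists N => m /sN; rewrite mulrC.
Qed.

Lemma rescale_bounded g r K s v : lip_germ g r K -> pos_nullseq s ->
  exists M, forall m, enorm (rescale g (s m) v) <= M.
Proof.
move=> [g0 r0 K0 gK] [s0 s_null]; apply: bounded_eventually.
have [N sN] := nullseq_mulr_lt (enorm v) s_null r0.
exists N, (K * enorm v) => m /sN svr; have sm := s0 m.
have svr' : enorm (s m *: v) < r by rewrite enormZ gtr0_norm.
have := gK _ 0 svr'; rewrite enorm0 g0 !subr0 enormZ gtr0_norm // => /(_ r0) gsv.
by rewrite enormZ ger0_norm ?invr_ge0 ?(ltW sm) // ler_pdivrMl // mulrCA.
Qed.

Lemma vlim_rescale_lip g r K s (y : nat -> 'rV[R]_k) p :
  lip_germ g r K -> pos_nullseq s -> vlim y p ->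
  vlim (fun m => rescale g (s m) (y m) - rescale g (s m) p) 0.
Proof.
move=> [g0 r0 K0 gK] [s0 s_null] yp; have [M yM] := vlim_bounded yp.
have [N sN] := nullseq_mulr_lt (`|M| + enorm p) s_null r0.
apply/vlim0/(@nullseq_le _ _ (fun m => K * enorm (y m - p))); last exact: nullseqZ.
exists N => m /sN sr; have sm := s0 m.
have ymr : enorm (s m *: y m) < r.
  rewrite enormZ gtr0_norm //; apply: le_lt_trans sr; apply: ler_wpM2l; first exact: ltW.
  by have := yM m; have := ler_norm M; have := enorm_ge0 p; lra.
have pr : enorm (s m *: p) < r.
  rewrite enormZ gtr0_norm //; apply: le_lt_trans sr; apply: ler_wpM2l; first exact: ltW.
  by rewrite lerDr normr_ge0.
rewrite !ger0_norm ?mulr_ge0 ?enorm_ge0 // -scalerBr enormZ ger0_norm ?invr_ge0 ?(ltW sm) //.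
rewrite ler_pdivrMl //; apply: le_trans (gK _ _ ymr pr) _.
by rewrite -scalerBr enormZ gtr0_norm // mulrCA.
Qed.

(* [g] has one-sided directional derivatives at [0]: the rescalings [t^-1 g(t v)]
   are Cauchy as [t -> 0+]. *)
Definition radial_cauchy g := forall v s t, pos_nullseq s -> pos_nullseq t ->
  vlim (fun m => rescale g (s m) v - rescale g (t m) v) 0.

Lemma radial_cauchy_lim g v s t w : radial_cauchy g -> pos_nullseq s -> pos_nullseq t ->
  vlim (fun m => rescale g (s m) v) w -> vlim (fun m => rescale g (t m) v) w.
Proof.
move=> g_rc s_pos t_pos /vlimB /(_ (g_rc v s t s_pos t_pos)); rewrite subr0.
by apply: eq_vlimW => m; rewrite opprB addrC subrK.
Qed.

Lemma radial_cauchy_by_uniq g r K : lip_germ g r K ->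
  (forall v s t w1 w2, v != 0 -> pos_nullseq s -> pos_nullseq t ->
    vlim (fun m => rescale g (s m) v) w1 -> vlim (fun m => rescale g (t m) v) w2 ->
    w1 = w2) ->
  radial_cauchy g.
Proof.
move=> g_lip uniq v s t s_pos t_pos.
have [g0 _ _ _] := g_lip.
have [->|v0] := eqVneq v 0.
  by apply: eq_vlimW (vlim_cst 0) => m; rewrite /rescale !scaler0 g0 !scaler0 subrr.
apply: contrapT => /not_nullseq[e [e0 [f f_incr fe]]].
have [M1 M1P] := rescale_bounded v g_lip (pos_nullseq_sub f_incr s_pos).
have [g1 [w1 [g1_incr w1P]]] := bolzano_weierstrass_row M1P.
have fg1_incr : {homo f \o g1 : m n / (m < n)%N} by move=> m n /g1_incr/f_incr.
have [M2 M2P] := rescale_bounded v g_lip (pos_nullseq_sub fg1_incr t_pos).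
have [g2 [w2 [g2_incr w2P]]] := bolzano_weierstrass_row M2P.
have phi_incr : {homo f \o g1 \o g2 : m n / (m < n)%N} by move=> m n /g2_incr/fg1_incr.
have w1P' := vlim_sub g2_incr w1P.
have := uniq v _ _ w1 w2 v0 (pos_nullseq_sub phi_incr s_pos)
  (pos_nullseq_sub phi_incr t_pos) w1P' w2P.
move=> w12; have : e <= enorm (w1 - w2).
  apply: enorm_vlim_ge (vlimB w1P' w2P) _; exists 0%N => m _.
  by have := fe (g1 (g2 m)); rewrite subr0 ger0_norm ?enorm_ge0.
by rewrite w12 subrr enorm0 leNgt e0.
Qed.

Lemma radial_cauchy_id : radial_cauchy id.
Proof.
move=> v s t [s0 _] [t0 _]; apply: eq_vlimW (vlim_cst 0) => m.
by rewrite /rescale !scalerA !mulVf ?gt_eqF // !scale1r subrr.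
Qed.

End Rescaling.

Section Products.
Variable R : realType.
Variables n1 n2 : nat.
Variables (h1 : 'rV[R]_n1 -> 'rV[R]_n1) (h2 : 'rV[R]_n2 -> 'rV[R]_n2).

Lemma prod_map0 : h1 0 = 0 -> h2 0 = 0 -> prod_map h1 h2 0 = 0.
Proof. by move=> h10 h20; rewrite /prod_map !linear0 h10 h20 row_mx0. Qed.

Lemma prod_mapB x y : prod_map h1 h2 x - prod_map h1 h2 y =
  row_mx (h1 (lsubmx x) - h1 (lsubmx y)) (h2 (rsubmx x) - h2 (rsubmx y)).
Proof. by rewrite /prod_map opp_row_mx add_row_mx. Qed.

Lemma rescale_prod_map (c : R) z : rescale (prod_map h1 h2) c z =
  row_mx (rescale h1 c (lsubmx z)) (rescale h2 c (rsubmx z)).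
Proof. by rewrite /rescale /prod_map scale_row_mx !linearZ. Qed.

Lemma radial_cauchy_prod :
  radial_cauchy (prod_map h1 h2) <-> radial_cauchy h1 /\ radial_cauchy h2.
Proof.
split=> [h_rc|[h1_rc h2_rc] v s t s_pos t_pos].
  split=> v s t s_pos t_pos.
    have := vlim_lsubmx (h_rc (row_mx v 0) s t s_pos t_pos); rewrite linear0.
    by apply: eq_vlimW => m; rewrite linearB /= !rescale_prod_map !row_mxKl.
  have := vlim_rsubmx (h_rc (row_mx 0 v) s t s_pos t_pos); rewrite linear0.
  by apply: eq_vlimW => m; rewrite linearB /= !rescale_prod_map !row_mxKr.
have := vlim_row_mx (h1_rc (lsubmx v) s t s_pos t_pos) (h2_rc (rsubmx v) s t s_pos t_pos).
by rewrite row_mx0; apply: eq_vlimW => m; rewrite !rescale_prod_map opp_row_mx add_row_mx.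
Qed.

Lemma lip_germ_prod r1 r2 K1 K2 : lip_germ h1 r1 K1 -> lip_germ h2 r2 K2 ->
  lip_germ (prod_map h1 h2) (Num.min r1 r2) (K1 + K2).
Proof.
move=> [h10 r10 K10 h1K] [h20 r20 K20 h2K]; split.
- exact: prod_map0.
- by rewrite lt_min r10 r20.
- exact: addr_ge0.
move=> x y; rewrite !lt_min => /andP[x1 x2] /andP[y1 y2].
rewrite prod_mapB; apply: le_trans (enorm_row_mx_le _ _) _.
have := h1K _ _ (le_lt_trans (enorm_lsubmx x) x1) (le_lt_trans (enorm_lsubmx y) y1).
have := h2K _ _ (le_lt_trans (enorm_rsubmx x) x2) (le_lt_trans (enorm_rsubmx y) y2).
have := ler_wpM2l K10 (enorm_lsubmx (x - y)).
have := ler_wpM2l K20 (enorm_rsubmx (x - y)).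
by rewrite !linearB /=; lra.
Qed.

Lemma bilip_germ_prod r1 r2 a1 a2 b1 b2 :
  bilip_germ h1 r1 a1 b1 -> bilip_germ h2 r2 a2 b2 ->
  bilip_germ (prod_map h1 h2) (Num.min r1 r2) (Num.min a1 a2) (Num.max b1 b2).
Proof.
move=> [h10 r10 a10 ab1 h1K] [h20 r20 a20 ab2 h2K].
have a0 : 0 < Num.min a1 a2 by rewrite lt_min a10 a20.
have b0 : 0 <= Num.max b1 b2 by rewrite le_max (le_trans (ltW a10) ab1).
split=> //; first exact: prod_map0.
- by rewrite lt_min r10 r20.
- by rewrite ge_min le_max ab1.
move=> x y; rewrite !lt_min => /andP[x1 x2] /andP[y1 y2].
have /andP[L1 U1] := h1K _ _ (le_lt_trans (enorm_lsubmx x) x1) (le_lt_trans (enorm_lsubmx y) y1).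
have /andP[L2 U2] := h2K _ _ (le_lt_trans (enorm_rsubmx x) x2) (le_lt_trans (enorm_rsubmx y) y2).
rewrite prod_mapB.
apply: (hypot_sandwich (x1 := enorm (lsubmx x - lsubmx y)) (x2 := enorm (rsubmx x - rsubmx y)));
  rewrite ?(ltW a0) ?enorm_ge0 ?enorm_row_mx_sqr ?enorm_hsubmx_sqr ?linearB //.
- apply/andP; split; [apply: le_trans L1 | apply: le_trans U1 _];
    by apply: ler_wpM2r; rewrite ?enorm_ge0 ?ge_min ?le_max ?lexx.
- apply/andP; split; [apply: le_trans L2 | apply: le_trans U2 _];
    by apply: ler_wpM2r; rewrite ?enorm_ge0 ?ge_min ?le_max ?lexx ?orbT.
Qed.

Lemma bilip_germ_prodl r a b :
  h2 0 = 0 -> bilip_germ (prod_map h1 h2) r a b -> bilip_germ h1 r a b.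
Proof.
move=> h20 [h0 r0 a0 ab hK]; split => // [|x y xr yr].
  by have := congr1 lsubmx h0; rewrite /prod_map row_mxKl !linear0.
have := hK (row_mx x 0) (row_mx y 0); rewrite !enorm_row_mx0r => /(_ xr yr).
by rewrite prod_mapB !row_mxKl !row_mxKr subrr opp_row_mx add_row_mx subrr !enorm_row_mx0r.
Qed.

Lemma bilip_germ_prodr r a b :
  h1 0 = 0 -> bilip_germ (prod_map h1 h2) r a b -> bilip_germ h2 r a b.
Proof.
move=> h10 [h0 r0 a0 ab hK]; split => // [|x y xr yr].
  by have := congr1 rsubmx h0; rewrite /prod_map row_mxKr !linear0.
have := hK (row_mx 0 x) (row_mx 0 y); rewrite !enorm_row_mx0l => /(_ xr yr).
by rewrite prod_mapB !row_mxKl !row_mxKr subrr opp_row_mx add_row_mx subrr !enorm_row_mx0l.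
Qed.

End Products.

Section Directions.
Variable R : realType.
Variable k : nat.
Implicit Types (x y : nat -> 'rV[R]_k) (d : 'rV[R]_k) (S : nat -> R).

Lemma tends0P x : tends0 x <-> nullseq (fun m => enorm (x m)).
Proof. exact: nullseqP. Qed.

Lemma dir_tendsP x d : dir_tends x d <-> vlim (fun m => normalize (x m)) d.
Proof. exact: nullseqP. Qed.

Lemma negligibleP x y :
  Defs.negligible x y <-> nullseq (fun m => enorm (x m) / enorm (y m)).
Proof. exact: nullseqP. Qed.

Lemma tends0_ray S (C : nat -> 'rV[R]_k) c : pos_nullseq S -> vlim C c ->
  tends0 (fun m => S m *: C m).
Proof.
move=> [S0 S_null] /vlim_bounded[M CM]; apply/tends0P.
apply: nullseq_lew (nullseqM (M := `|M|) (fun=> lexx _) S_null) => m.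
rewrite ger0_norm ?enorm_ge0 // enormZ gtr0_norm // normrM ger0_norm ?(ltW (S0 m)) //.
by apply: ler_wpM2l; [apply: ltW | apply: le_trans (CM m) (ler_norm _)].
Qed.

Lemma dir_tends_ray S (C : nat -> 'rV[R]_k) c : pos_nullseq S -> vlim C c -> c != 0 ->
  dir_tends (fun m => S m *: C m) (normalize c).
Proof.
move=> [S0 _] Cc c0; apply/dir_tendsP; apply: eq_vlimW (vlim_normalize Cc c0) => m.
exact: normalizeZ.
Qed.

Lemma Dir_ray (A : set 'rV[R]_k) S (C : nat -> 'rV[R]_k) c :
  pos_nullseq S -> vlim C c -> c != 0 -> (forall m, C m != 0) ->
  (exists N, forall m, (N <= m)%N -> A (S m *: C m)) -> Dir A (normalize c).
Proof.
move=> S_pos Cc c0 C0 [N AC].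
have shift_incr : {homo addn^~ N : m n / (m < n)%N} by move=> m n; rewrite ltn_add2r.
have [S0 _] := S_pos; split; first exact: enorm_normalize.
exists (fun m => S (m + N)%N *: C (m + N)%N); split.
  move=> m; split; first by apply: AC; rewrite leq_addl.
  by apply/eqP; rewrite scaler_eq0 negb_or C0 gt_eqF.
split; first exact: (tends0_ray (pos_nullseq_sub shift_incr S_pos) (vlim_sub shift_incr Cc)).
exact: (dir_tends_ray (pos_nullseq_sub shift_incr S_pos) (vlim_sub shift_incr Cc)).
Qed.

Lemma dir_tends_neq0 x d : dir_tends x d -> enorm d = 1 ->
  exists N, forall m, (N <= m)%N -> x m != 0.
Proof.
move=> /dir_tendsP xd d1; have [N xN] := nullseq_lt xd ltr01.
exists N => m /xN; apply: contraTneq => ->.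
by rewrite /normalize scaler0 sub0r enormN d1 ltxx.
Qed.

Lemma negligible_sym x y : (exists N, forall m, (N <= m)%N -> x m != 0) ->
  Defs.negligible (fun m => x m - y m) x -> Defs.negligible (fun m => x m - y m) y.
Proof.
move=> [N0 x0] /negligibleP xy; apply/negligibleP.
have [N1 xyN] := nullseq_lt xy (ltac:(by []) : 0 < 2^-1 :> R).
apply: (@nullseq_le _ _ (fun m => 2 * (enorm (x m - y m) / enorm (x m)))); last first.
  exact: nullseqZ.
exists (maxn N0 N1) => m; rewrite geq_max => /andP[/x0/enorm_gt0 xm_gt0 /xyN].
set D := enorm (x m - y m); set X := enorm (x m) => DX.
have D0 : 0 <= D := enorm_ge0 _.
have XY : X - D <= enorm (y m) by have := enorm_lerB (x m) (x m - y m); rewrite subKr.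
have {}DX : D < X / 2 by rewrite ltr_pdivrMr // mulrC in DX.
have Y0 : 0 < enorm (y m) by lra.
rewrite ger0_norm ?divr_ge0 ?enorm_ge0 // ger0_norm ?mulr_ge0 ?invr_ge0 ?enorm_ge0 //.
rewrite ler_pdivrMr // (_ : _ * _ * _ = 2 * D * enorm (y m) / X).
  by rewrite ler_pdivlMr //; nra.
by rewrite mulrA mulrAC.
Qed.

Lemma pos_gauge x : tends0 x ->
  exists2 s, pos_nullseq s & forall m, x m != 0 -> s m = enorm (x m).
Proof.
move=> /tends0P x0.
exists (fun m => if x m == 0 then (m.+1%:R)^-1 else enorm (x m)); last first.
  by move=> m /negPf->.
split=> [m|]; first by case: eqVneq => [_|/enorm_gt0]; rewrite ?invr_gt0.
apply: nullseq_lew (nullseqD x0 (nullseq_inv_nat 1)) => m.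
have h0 : 0 <= 1 / m.+1%:R :> R by rewrite divr_ge0.
rewrite [X in _ <= X]ger0_norm ?addr_ge0 ?enorm_ge0 //.
case: eqVneq => [->|_]; first by rewrite enorm0 add0r mul1r ger0_norm ?invr_ge0.
by rewrite ger0_norm ?enorm_ge0 // lerDl.
Qed.

End Directions.

Section Graphs.
Variable R : realType.
Variable k : nat.
Implicit Types (h : 'rV[R]_k -> 'rV[R]_k) (s : nat -> R) (v w : 'rV[R]_k).

Lemma graph_seq h (z : nat -> 'rV[R]_(k + k)) : (forall m, graph h (z m)) ->
  exists x : nat -> 'rV[R]_k, forall m, z m = row_mx (x m) (h (x m)).
Proof.
move=> zh; have [x xP] := choice (fun m => let: ex_intro2 x _ xz := zh m in ex_intro _ x xz).
by exists x => m; rewrite xP.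
Qed.

Lemma Dir_graph_rescale h r K d : lip_germ h r K -> Dir (graph h) d ->
  exists2 s, pos_nullseq s & vlim (fun m => rescale h (s m) (lsubmx d)) (rsubmx d).
Proof.
move=> h_lip [_ [z [zh [/tends0P z0 /dir_tendsP zd]]]].
have [x xP] := graph_seq (fun m => (zh m).1).
pose s m := enorm (z m); have s_pos : pos_nullseq s.
  by split=> // m; apply/enorm_gt0/eqP; apply: (zh m).2.
exists s => //; have [s0 _] := s_pos.
have xd : vlim (fun m => (s m)^-1 *: x m) (lsubmx d).
  have := vlim_lsubmx zd; apply: eq_vlimW => m.
  by rewrite linearZ /=; congr (_ *: _); rewrite xP row_mxKl.
have hxd : vlim (fun m => (s m)^-1 *: h (x m)) (rsubmx d).
  have := vlim_rsubmx zd; apply: eq_vlimW => m.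
  by rewrite linearZ /=; congr (_ *: _); rewrite xP row_mxKr.
have := vlimB hxd (vlim_rescale_lip h_lip s_pos xd); rewrite subr0.
by apply: eq_vlimW => m; rewrite rescaleK // opprB addrC subrK.
Qed.

Lemma Dir_graph_of_rescale h s v w : pos_nullseq s -> v != 0 ->
  vlim (fun m => rescale h (s m) v) w -> Dir (graph h) (normalize (row_mx v w)).
Proof.
move=> s_pos v0 hw; have [s0 _] := s_pos.
apply: (@Dir_ray _ _ _ s (fun m => row_mx v (rescale h (s m) v))) => //.
- exact: vlim_row_mx (vlim_cst v) hw.
- exact: row_mx_neq0l.
- by move=> m; apply: row_mx_neq0l.
- exists 0%N => m _; exists (s m *: v) => //.
  by rewrite scale_row_mx /rescale scalerA mulfV ?gt_eqF // scale1r.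
Qed.

Lemma SSP_graph_of_radial_cauchy h r K : lip_germ h r K -> radial_cauchy h -> SSP (graph h).
Proof.
move=> h_lip h_rc a a0 [d dD ad].
have [s s_pos hd] := Dir_graph_rescale h_lip dD.
have [sa sa_pos saP] := pos_gauge a0; have [sa0 _] := sa_pos.
have [N aN] := dir_tends_neq0 ad dD.1.
have ad' : vlim (fun m => (sa m)^-1 *: a m) d.
  by move/dir_tendsP: ad; apply: eq_vlim; exists N => m /aN/saP->.
pose xa m := lsubmx (a m); pose ya m := rsubmx (a m).
have xad : vlim (fun m => (sa m)^-1 *: xa m) (lsubmx d).
  by have := vlim_lsubmx ad'; apply: eq_vlimW => m; rewrite linearZ.
have yad : vlim (fun m => (sa m)^-1 *: ya m) (rsubmx d).
  by have := vlim_rsubmx ad'; apply: eq_vlimW => m; rewrite linearZ.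
have hxad : vlim (fun m => (sa m)^-1 *: h (xa m)) (rsubmx d).
  have := vlimD (radial_cauchy_lim h_rc s_pos sa_pos hd) (vlim_rescale_lip h_lip sa_pos xad).
  by rewrite addr0; apply: eq_vlimW => m; rewrite rescaleK // addrC subrK.
have := vlimB yad hxad; rewrite subrr => yhx.
exists (fun m => row_mx (xa m) (h (xa m))); split; first by move=> m; exists (xa m).
have ab : Defs.negligible (fun m => a m - row_mx (xa m) (h (xa m))) a.
  apply/negligibleP; move/vlim0: yhx; apply: nullseq_le; exists N => m /aN am0.
  rewrite -{1}(hsubmxK (a m)) opp_row_mx add_row_mx subrr enorm_row_mx0l -saP //.
  rewrite -scalerBr enormZ mulrC.
  by rewrite !ger0_norm ?mulr_ge0 ?normr_ge0 ?invr_ge0 ?enorm_ge0 ?(ltW (sa0 m)).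
by split=> //; apply: negligible_sym => //; exists N.
Qed.

Lemma radial_cauchy_of_SSP_graph h r K : lip_germ h r K -> SSP (graph h) -> radial_cauchy h.
Proof.
move=> h_lip hS; apply: (radial_cauchy_by_uniq h_lip) => v S T w1 w2 v0 S_pos T_pos Sw1 Tw2.
have [T0 _] := T_pos; set c := row_mx v w1; have c0 : c != 0 := row_mx_neq0l _ v0.
(* [c] is, up to scaling, a limit direction of the graph, so [SSP] puts graph points [b m]
   near the ray through [c] *)
pose a m := T m *: c.
have [b [bh [ab _]]] := hS a (tends0_ray T_pos (vlim_cst c))
  (ex_intro2 _ _ _ (Dir_graph_of_rescale S_pos v0 Sw1) (dir_tends_ray T_pos (vlim_cst c) c0)).
have [x xP] := graph_seq bh.
have abT : vlim (fun m => (T m)^-1 *: (a m - b m)) 0.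
  apply/vlim0; move/negligibleP: ab; move/(nullseqZ (enorm c)).
  have c_gt0 := enorm_gt0 c0.
  apply: nullseq_lew => m; have Tm := T0 m.
  rewrite ger0_norm ?enorm_ge0 // ger0_norm ?mulr_ge0 ?invr_ge0 ?enorm_ge0 //.
  rewrite /a !enormZ gtr0_norm ?invr_gt0 // gtr0_norm // le_eqVlt; apply/orP; left.
  by apply/eqP; field; rewrite !gt_eqF.
have abE i : (T i)^-1 *: (a i - b i) =
    row_mx (v - (T i)^-1 *: x i) (w1 - (T i)^-1 *: h (x i)).
  by rewrite /a xP scalerBr scalerA mulVf ?gt_eqF // scale1r scale_row_mx opp_row_mx add_row_mx.
have xv : vlim (fun m => (T m)^-1 *: x m) v.
  have := vlimB (vlim_cst v) (vlim_lsubmx abT); rewrite linear0 subr0.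
  by apply: eq_vlimW => m; rewrite abE row_mxKl opprB addrC subrK.
have hxw1 : vlim (fun m => (T m)^-1 *: h (x m)) w1.
  have := vlimB (vlim_cst w1) (vlim_rsubmx abT); rewrite linear0 subr0.
  by apply: eq_vlimW => m; rewrite abE row_mxKr opprB addrC subrK.
have := vlimB hxw1 (vlim_rescale_lip h_lip T_pos xv); rewrite subr0 => Tw1.
apply: vlim_uniq Tw2; apply: eq_vlimW Tw1 => m.
by rewrite rescaleK // opprB addrC subrK.
Qed.

Lemma SSP_mapP h r K : lip_germ h r K -> SSP_map h <-> radial_cauchy h.
Proof.
move=> h_lip; split; first exact: radial_cauchy_of_SSP_graph h_lip.
exact: SSP_graph_of_radial_cauchy h_lip.
Qed.

End Graphs.

Section Semilines.
Variable R : realType.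
Variable n : nat.
Implicit Types (g : 'rV[R]_n -> 'rV[R]_n) (v w : 'rV[R]_n) (a : 'rV[R]_(n + n)).

Lemma prod_map_idZ g (t : R) a : 0 < t ->
  prod_map (@id 'rV[R]_n) g (t *: a) = t *: row_mx (lsubmx a) (rescale g t (rsubmx a)).
Proof.
move=> t0; rewrite /prod_map !linearZ /= scale_row_mx /rescale scalerA mulfV ?gt_eqF //.
by rewrite scale1r.
Qed.

Lemma normalize_row_mx_inj v w1 w2 : v != 0 ->
  normalize (row_mx v w1) = normalize (row_mx v w2) -> w1 = w2.
Proof.
move=> v0 E; have := congr1 lsubmx E; have := congr1 rsubmx E.
rewrite /normalize !linearZ /= !row_mxKl !row_mxKr => Er El.
suff Ec : (enorm (row_mx v w1))^-1 = (enorm (row_mx v w2))^-1.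
  by move: Er; rewrite Ec; apply: scalerI; rewrite invr_eq0 gt_eqF ?enorm_gt0 ?row_mx_neq0l.
apply/eqP; rewrite -subr_eq0.
have : ((enorm (row_mx v w1))^-1 - (enorm (row_mx v w2))^-1) *: v == 0.
  by rewrite scalerBl El subrr.
by rewrite scaler_eq0 (negPf v0) orbF.
Qed.

Lemma semiline_ball_scale a (t r : R) : enorm a = 1 -> 0 <= t -> t < r ->
  (semiline a `&` eball0 r) (t *: a).
Proof. by move=> a1 t0 tr; split; [exists t | rewrite /eball0 /= enormZ a1 mulr1 ger0_norm]. Qed.

Lemma radial_cauchy_of_semiline_SSP g r K :
  lip_germ g r K -> semiline_SSP (prod_map (@id 'rV[R]_n) g) -> radial_cauchy g.
Proof.
move=> g_lip [r0 r0_gt0 gS]; apply: (radial_cauchy_by_uniq g_lip).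
move=> v S T w1 w2 v0 S_pos T_pos Sw1 Tw2.
have c0 w : row_mx v w != 0 := row_mx_neq0l w v0.
set L := enorm (row_mx v v); have L0 : 0 < L := enorm_gt0 (c0 v).
have [d Ad] := gS r0 r0_gt0 (lexx _) _ (enorm_normalize (c0 v)).
set A := _ @` _ in Ad.
(* [U (v, g_U(v))] is the image of the point [L U] of the semiline through [(v, v)] *)
have inA (U : R) : 0 < U -> U * L < r0 -> A (U *: row_mx v (rescale g U v)).
  move=> U0 UL; exists ((U * L) *: normalize (row_mx v v)).
    by apply: semiline_ball_scale; rewrite ?enorm_normalize ?mulr_ge0 ?(ltW U0) ?(ltW L0).
  rewrite /normalize scalerA -mulrA mulfV ?gt_eqF // mulr1 prod_map_idZ //.
  by rewrite row_mxKl row_mxKr.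
have DirA (U : nat -> R) w : pos_nullseq U -> vlim (fun m => rescale g (U m) v) w ->
    d = normalize (row_mx v w).
  move=> U_pos Uw; have [U0 U_null] := U_pos.
  suff : Dir A (normalize (row_mx v w)) by rewrite Ad => ->.
  apply: (@Dir_ray _ _ _ U (fun m => row_mx v (rescale g (U m) v))) => //.
    exact: vlim_row_mx (vlim_cst v) Uw.
  by have [N UN] := nullseq_mulr_lt L U_null r0_gt0; exists N => m /UN; apply: inA.
by apply: normalize_row_mx_inj v0 _; rewrite -(DirA _ _ S_pos Sw1) -(DirA _ _ T_pos Tw2).
Qed.

Lemma enorm_row_mx_rescale_ge g r K1 K2 a (t : R) : bilip_germ g r K1 K2 ->
  enorm a = 1 -> 0 < t -> t < r ->
  Num.min 1 K1 <= enorm (row_mx (lsubmx a) (rescale g t (rsubmx a))).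
Proof.
move=> [g0 r0 K10 K12 gK] a1 t0 tr.
have ra : enorm (rsubmx a) <= 1 by rewrite -a1 enorm_rsubmx.
have tar : enorm (t *: rsubmx a) < r.
  rewrite enormZ gtr0_norm //; apply: (le_lt_trans _ tr).
  by apply: ler_piMr; [apply: ltW | apply: ra].
have /andP[gL _] := gK _ 0 tar ltac:(by rewrite enorm0).
rewrite g0 !subr0 !enormZ gtr0_norm // in gL.
have {}gL : K1 * enorm (rsubmx a) <= enorm (rescale g t (rsubmx a)).
  by rewrite /rescale enormZ gtr0_norm ?invr_gt0 // ler_pdivlMl // mulrCA.
have := enorm_hsubmx_sqr a; rewrite a1 expr1n => xy1.
set k := Num.min 1 K1; have k0 : 0 < k by rewrite lt_min ltr01 K10.
have k1 : k <= 1 by rewrite ge_min lexx.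
have kK : k <= K1 by rewrite ge_min lexx orbT.
apply: le_sqr_nneg; first exact: enorm_ge0.
rewrite enorm_row_mx_sqr; move: gL xy1.
set x := enorm (lsubmx a); set y := enorm (rsubmx a); set z := enorm (rescale _ _ _).
have x0 : 0 <= x := enorm_ge0 _; have y0 : 0 <= y := enorm_ge0 _.
have z0 : 0 <= z := enorm_ge0 _.
move=> yz xy1; have kyz : k * y <= z by apply: le_trans yz; apply: ler_wpM2r.
have kyz2 : k ^+ 2 * y ^+ 2 <= z ^+ 2.
  by rewrite -exprMn ler_sqr ?nnegrE ?mulr_ge0 ?(ltW k0).
have kx2 : k ^+ 2 * x ^+ 2 <= x ^+ 2 by rewrite ler_piMl ?sqr_ge0 // expr_le1 ?(ltW k0).
have -> : k ^+ 2 = k ^+ 2 * x ^+ 2 + k ^+ 2 * y ^+ 2 by rewrite -mulrDr -xy1 mulr1.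
by lra.
Qed.

Section SemilineImage.
Variables (g : 'rV[R]_n -> 'rV[R]_n) (r K1 K2 r' : R) (a : 'rV[R]_(n + n)) (w : 'rV[R]_n).
Hypotheses (g_bilip : bilip_germ g r K1 K2) (r'0 : 0 < r') (r'r : r' <= r) (a1 : enorm a = 1).
Hypothesis rescale_lim : forall tau, pos_nullseq tau ->
  vlim (fun m => rescale g (tau m) (rsubmx a)) w.

Let k := Num.min 1 K1.
Let c := row_mx (lsubmx a) w.

Let k_gt0 : 0 < k.
Proof. by have [_ _ K10 _ _] := g_bilip; rewrite lt_min ltr01 K10. Qed.

Let semiline_image_ge t : 0 < t -> t < r' ->
  k <= enorm (row_mx (lsubmx a) (rescale g t (rsubmx a))).
Proof. by move=> t0 tr; apply: enorm_row_mx_rescale_ge g_bilip a1 t0 (lt_le_trans tr r'r). Qed.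

Let semiline_image_lim tau : pos_nullseq tau ->
  vlim (fun m => row_mx (lsubmx a) (rescale g (tau m) (rsubmx a))) c.
Proof. by move=> tau_pos; apply: vlim_row_mx (vlim_cst _) (rescale_lim tau_pos). Qed.

Let c_neq0 : c != 0.
Proof.
have [s s_pos sr] := pos_nullseq_lt r'0.
have /(enorm_vlim_ge (semiline_image_lim s_pos)) : exists N, forall m, (N <= m)%N ->
    k <= enorm (row_mx (lsubmx a) (rescale g (s m) (rsubmx a))).
  by exists 0%N => m _; apply: semiline_image_ge (s_pos.1 _) (sr _).
by apply: contraTneq => ->; rewrite enorm0 -ltNge.
Qed.

Let Dir_semiline_image_normalize :
  Dir (prod_map (@id 'rV[R]_n) g @` (semiline a `&` eball0 r')) (normalize c).
Proof.
have [s s_pos sr] := pos_nullseq_lt r'0.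
apply: (Dir_ray s_pos (semiline_image_lim s_pos)) => //.
  move=> m; apply: contraTneq (semiline_image_ge (s_pos.1 m) (sr m)) => ->.
  by rewrite enorm0 -ltNge.
exists 0%N => m _; exists (s m *: a); last by rewrite (prod_map_idZ _ _ (s_pos.1 _)).
exact: semiline_ball_scale a1 (ltW (s_pos.1 _)) (sr _).
Qed.

Let Dir_semiline_image_sub e :
  Dir (prod_map (@id 'rV[R]_n) g @` (semiline a `&` eball0 r')) e -> e = normalize c.
Proof.
move=> [_ [x [xA [/tends0P x0 /dir_tendsP xe]]]].
have tau_ex i : exists tau,
    [/\ 0 < tau, tau < r' & x i = prod_map (@id 'rV[R]_n) g (tau *: a)].
  have [[y [[t t0 <-] yr] <-] xi0] := xA i; exists t.
  rewrite /eball0 /= enormZ a1 mulr1 ger0_norm // in yr; split=> //.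
  rewrite lt_def t0 andbT; apply: contra_notN xi0 => /eqP ->.
  by have [g0 _ _ _ _] := g_bilip; rewrite scale0r prod_map0.
have [tau tauP] := choice tau_ex.
have tau0 i : 0 < tau i by have [] := tauP i.
have xE i : x i = tau i *: row_mx (lsubmx a) (rescale g (tau i) (rsubmx a)).
  by have [_ _ ->] := tauP i; rewrite prod_map_idZ.
(* [|x i| >= k tau i], so the parameters [tau i] tend to [0] with [x i] *)
have tau_pos : pos_nullseq tau.
  split=> //; apply: nullseq_lew (nullseqZ k^-1 x0) => i.
  rewrite !ger0_norm ?mulr_ge0 ?invr_ge0 ?enorm_ge0 ?(ltW (tau0 i)) ?(ltW k_gt0) //.
  rewrite ler_pdivlMl // xE enormZ gtr0_norm // mulrC ler_wpM2l ?(ltW (tau0 i)) //.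
  by have [? ? _] := tauP i; apply: semiline_image_ge.
apply: vlim_uniq xe _.
have /dir_tendsP := dir_tends_ray tau_pos (semiline_image_lim tau_pos) c_neq0.
by apply: eq_vlimW => i; rewrite xE.
Qed.

Lemma Dir_semiline_image :
  Dir (prod_map (@id 'rV[R]_n) g @` (semiline a `&` eball0 r')) = [set normalize c].
Proof.
apply/seteqP; split=> e; first exact: Dir_semiline_image_sub.
by move=> /= ->; apply: Dir_semiline_image_normalize.
Qed.

End SemilineImage.

Lemma semiline_SSP_of_radial_cauchy g r K1 K2 :
  bilip_germ g r K1 K2 -> radial_cauchy g -> semiline_SSP (prod_map (@id 'rV[R]_n) g).
Proof.
move=> g_bilip g_rc; have [_ r0 _ _ _] := g_bilip.
exists r => // r' r'0 r'r a a1.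
have [s s_pos _] := pos_nullseq_lt r'0.
have [M sM] := rescale_bounded (rsubmx a) (bilip_germ_lip g_bilip) s_pos.
have [phi [w [phi_incr sw]]] := bolzano_weierstrass_row sM.
exists (normalize (row_mx (lsubmx a) w)).
apply: Dir_semiline_image g_bilip r'0 r'r a1 _ => tau tau_pos.
exact: radial_cauchy_lim g_rc (pos_nullseq_sub phi_incr s_pos) tau_pos sw.
Qed.

Lemma semiline_SSP_prod_idP g r K1 K2 : bilip_germ g r K1 K2 ->
  semiline_SSP (prod_map (@id 'rV[R]_n) g) <-> radial_cauchy g.
Proof.
move=> g_bilip; split; first exact: radial_cauchy_of_semiline_SSP (bilip_germ_lip g_bilip).
exact: semiline_SSP_of_radial_cauchy g_bilip.
Qed.

End Semilines.

Section Inverse.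
Variable R : realType.
Variable k : nat.
Implicit Types (f g : 'rV[R]_k -> 'rV[R]_k).

Lemma radial_cauchy_inv f g r1 a1 b1 r2 K2 rho :
  bilip_germ f r1 a1 b1 -> lip_germ g r2 K2 -> 0 < rho ->
  (forall y, enorm y < rho -> f (g y) = y) -> radial_cauchy f -> radial_cauchy g.
Proof.
move=> f_bilip g_lip rho0 fgK f_rc; have [_ r10 a10 _ fK] := f_bilip.
apply: (radial_cauchy_by_uniq g_lip) => u S T p1 p2 _ S_pos T_pos Sp1 Tp2.
have back (U : nat -> R) p : pos_nullseq U -> vlim (fun m => rescale g (U m) u) p ->
    vlim (fun m => rescale f (U m) p) u.
  move=> U_pos Up; have [U0 U_null] := U_pos.
  have := vlimB (vlim_cst u) (vlim_rescale_lip (bilip_germ_lip f_bilip) U_pos Up).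
  rewrite subr0; apply: eq_vlim; have [N UN] := nullseq_mulr_lt (enorm u) U_null rho0.
  exists N => m /UN Uu; rewrite rescaleK // fgK ?enormZ ?gtr0_norm //.
  by rewrite /rescale scalerA mulVf ?gt_eqF // scale1r opprB addrC subrK.
have := vlimB (radial_cauchy_lim f_rc S_pos T_pos (back _ _ S_pos Sp1)) (back _ _ T_pos Tp2).
rewrite subrr => Tp12; have [T0 T_null] := T_pos.
(* the lower Lipschitz bound of [f] survives the rescaling *)
have : a1 * enorm (p1 - p2) <= enorm (0 : 'rV[R]_k).
  apply: enorm_vlim_ge Tp12 _.
  have [N1 TN1] := nullseq_mulr_lt (enorm p1) T_null r10.
  have [N2 TN2] := nullseq_mulr_lt (enorm p2) T_null r10.
  exists (maxn N1 N2) => m; rewrite geq_max => /andP[/TN1 Tp1r /TN2 Tp2r].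
  have Tm := T0 m; rewrite -scalerBr enormZ ger0_norm ?invr_ge0 ?(ltW Tm) //.
  have Tp1r' : enorm (T m *: p1) < r1 by rewrite enormZ gtr0_norm.
  have Tp2r' : enorm (T m *: p2) < r1 by rewrite enormZ gtr0_norm.
  have /andP[fL _] := fK _ _ Tp1r' Tp2r'.
  by rewrite ler_pdivlMl //; apply: le_trans fL; rewrite -scalerBr enormZ gtr0_norm // mulrCA.
rewrite enorm0 pmulr_rle0 // => p12; apply/eqP; rewrite -subr_eq0; apply/eqP/enorm_eq0.
by apply/eqP; rewrite eq_le p12 enorm_ge0.
Qed.

End Inverse.

Section Homeomorphisms.
Variable R : realType.

Lemma ball_row_coord k (x y : 'rV[R]_k) e : ball x e y -> forall i, `|x ord0 i - y ord0 i| < e.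
Proof. by move=> [_ xy] i; apply: xy. Qed.

Lemma ball_row_of_coord k (x y : 'rV[R]_k) e :
  0 < e -> (forall i, `|x ord0 i - y ord0 i| < e) -> ball x e y.
Proof. by move=> e0 xy; split=> // i j; rewrite (ord1 i); apply: xy. Qed.

Lemma nbhs0_enorm k (V : set 'rV[R]_k) : nbhs (0 : 'rV[R]_k) V ->
  exists2 d, 0 < d & forall y, enorm y < d -> V y.
Proof.
move=> /nbhs_ballP[d /= d0 dV]; exists d => // y yd; apply/dV/ball_row_of_coord => // i.
by rewrite mxE sub0r normrN; apply: le_lt_trans (enorm_coord _ _) yd.
Qed.

Lemma open0_enorm k (V : set 'rV[R]_k) : open V -> V 0 ->
  exists2 d, 0 < d & forall y, enorm y < d -> V y.
Proof. by rewrite openE => /[apply]; apply: nbhs0_enorm. Qed.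

Lemma continuous0_enorm k (g : 'rV[R]_k -> 'rV[R]_k) : g 0 = 0 -> {for 0, continuous g} ->
  forall e, 0 < e -> exists2 d, 0 < d & forall y, enorm y < d -> enorm (g y) < e.
Proof.
move=> g0 g_cont e e0; have k0 : 0 < k%:R + 1 :> R by rewrite ltr_wpDl.
have := g_cont _ (nbhsx_ballx (g 0) _ (divr_gt0 e0 k0)); rewrite g0.
move=> /nbhs0_enorm[d d0 dP]; exists d => // y /dP /ball_row_coord gy.
apply: le_lt_trans (enorm_le_coord (c := e / (k%:R + 1)) _) _.
  by move=> i; apply: ltW; have := gy i; rewrite mxE sub0r normrN.
by rewrite mulrA ltr_pdivrMr //; lra.
Qed.

Lemma continuous_row_mx k n1 n2 (f1 : 'rV[R]_k -> 'rV[R]_n1) (f2 : 'rV[R]_k -> 'rV[R]_n2) z :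
  {for z, continuous f1} -> {for z, continuous f2} ->
  {for z, continuous (fun w => row_mx (f1 w) (f2 w))}.
Proof.
move=> f1_cont f2_cont A /nbhs_ballP[e /= e0 eA].
have N1 : nbhs z (f1 @^-1` ball (f1 z) e) := f1_cont _ (nbhsx_ballx (f1 z) _ e0).
have N2 : nbhs z (f2 @^-1` ball (f2 z) e) := f2_cont _ (nbhsx_ballx (f2 z) _ e0).
apply: (filterS _ (filterI N1 N2)) => w [/= /ball_row_coord B1 /ball_row_coord B2].
apply/eA/ball_row_of_coord => // i; rewrite !mxE; case: splitP => j _; [exact: B1 | exact: B2].
Qed.

Lemma bilip_germ_inv k (h hinv : 'rV[R]_k -> 'rV[R]_k) r K1 K2 :
  bilip_germ h r K1 K2 -> homeo_germ_inv h hinv ->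
  exists2 rho, 0 < rho & [/\ bilip_germ hinv rho K2^-1 K1^-1,
    forall y, enorm y < rho -> h (hinv y) = y &
    forall x, enorm x < rho -> hinv (h x) = x].
Proof.
move=> [h0 r0 K10 K12 hK] [_ [U [V [[oU oV U0 V0] [hU hV _ hinv_cont]]]]].
have hinv0 : hinv 0 = 0 by have [_] := hU 0 U0; rewrite h0.
rewrite continuous_open_subspace // in hinv_cont.
have [d1 d10 d1P] := continuous0_enorm hinv0 (hinv_cont 0 (mem_set V0)) r0.
have [d2 d20 d2P] := open0_enorm oV V0; have [d3 d30 d3P] := open0_enorm oU U0.
have K20 : 0 < K2 := lt_le_trans K10 K12.
exists (Num.min d1 (Num.min d2 d3)); first by rewrite !lt_min d10 d20 d30.
split; last 2 first.
- by move=> y; rewrite !lt_min => /and3P[_ /d2P/hV[]].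
- by move=> x; rewrite !lt_min => /and3P[_ _ /d3P/hU[]].
split=> //; rewrite ?lt_min ?d10 ?d20 ?d30 ?invr_gt0 ?lef_pV2 ?posrE //.
move=> y y'; rewrite !lt_min => /and3P[/d1P y1 /d2P/hV[_ hy] _] /and3P[/d1P y1' /d2P/hV[_ hy'] _].
have /andP[L U'] := hK _ _ y1 y1'; rewrite hy hy' in L U'.
by apply/andP; split; [rewrite ler_pdivrMl | rewrite ler_pdivlMl].
Qed.

Lemma homeo_germ_prod n1 n2 (h1 : 'rV[R]_n1 -> 'rV[R]_n1) (h2 : 'rV[R]_n2 -> 'rV[R]_n2) :
  homeo_germ h1 -> homeo_germ h2 -> homeo_germ (prod_map h1 h2).
Proof.
move=> [g1 [h10 [U1 [V1 [[oU1 oV1 U10 V10] [hU1 hV1 h1_cont g1_cont]]]]]].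
move=> [g2 [h20 [U2 [V2 [[oU2 oV2 U20 V20] [hU2 hV2 h2_cont g2_cont]]]]]].
pose box (A1 : set 'rV[R]_n1) (A2 : set 'rV[R]_n2) : set 'rV[R]_(n1 + n2) :=
  lsubmx @^-1` A1 `&` rsubmx @^-1` A2.
have open_box A1 A2 : open A1 -> open A2 -> open (box A1 A2).
  move=> oA1 oA2; apply: openI; apply: open_comp => // z _;
    [exact: continuous_lsubmx | exact: continuous_rsubmx].
have prod_cont (f1 : 'rV[R]_n1 -> 'rV[R]_n1) (f2 : 'rV[R]_n2 -> 'rV[R]_n2) A1 A2 :
    open A1 -> open A2 -> {within A1, continuous f1} -> {within A2, continuous f2} ->
    {within box A1 A2, continuous prod_map f1 f2}.
  move=> oA1 oA2; have oB := open_box _ _ oA1 oA2.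
  rewrite !continuous_open_subspace // => f1_cont f2_cont.
  move=> z /set_mem[/= z1 z2].
  apply: (continuous_row_mx (f1 := f1 \o lsubmx) (f2 := f2 \o rsubmx)).
    exact: continuous_comp (@continuous_lsubmx _ 1 _ _ z) (f1_cont _ (mem_set z1)).
  exact: continuous_comp (@continuous_rsubmx _ 1 _ _ z) (f2_cont _ (mem_set z2)).
exists (prod_map g1 g2); split; first exact: prod_map0.
exists (box U1 U2), (box V1 V2); split.
  by split; [apply: open_box | apply: open_box | split; rewrite /= linear0..].
split; [| |exact: prod_cont|exact: prod_cont].
- move=> z [/= /hU1[V1z g1K] /hU2[V2z g2K]].
  by rewrite /prod_map /box /= !row_mxKl !row_mxKr g1K g2K hsubmxK.
- move=> z [/= /hV1[U1z h1K] /hV2[U2z h2K]].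
  by rewrite /prod_map /box /= !row_mxKl !row_mxKr h1K h2K hsubmxK.
Qed.

End Homeomorphisms.

Lemma SSP_map_prod_idP (R : realType) n (g : 'rV[R]_n -> 'rV[R]_n) r K1 K2 :
  bilip_germ g r K1 K2 -> SSP_map (prod_map (@id 'rV[R]_n) g) <-> radial_cauchy g.
Proof.
move=> g_bilip; have g_lip := bilip_germ_lip g_bilip.
rewrite (SSP_mapP (lip_germ_prod (lip_germ_id _ ltr01) g_lip)) radial_cauchy_prod.
by split=> [[]|] // g_rc; split=> //; apply: radial_cauchy_id.
Qed.

Lemma radial_cauchy_homeo_inv (R : realType) n (h hinv : 'rV[R]_n -> 'rV[R]_n) r K1 K2 :
  bilip_germ h r K1 K2 -> homeo_germ_inv h hinv ->
  exists r' K1' K2', bilip_germ hinv r' K1' K2' /\ (radial_cauchy h <-> radial_cauchy hinv).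
Proof.
move=> h_bilip h_inv; have [rho rho0 [hinv_bilip hK hinvK]] := bilip_germ_inv h_bilip h_inv.
exists rho, K2^-1, K1^-1; split=> //; split.
  exact: radial_cauchy_inv h_bilip (bilip_germ_lip hinv_bilip) rho0 hK.
exact: radial_cauchy_inv hinv_bilip (bilip_germ_lip h_bilip) rho0 hinvK.
Qed.

Lemma SSP_bilip_homeo_prodP (R : realType) n1 n2
    (h1 : 'rV[R]_n1 -> 'rV[R]_n1) (h2 : 'rV[R]_n2 -> 'rV[R]_n2) :
  homeo_germ h1 -> homeo_germ h2 ->
  SSP_bilip_homeo h1 /\ SSP_bilip_homeo h2 <-> SSP_bilip_homeo (prod_map h1 h2).
Proof.
move=> h1_homeo h2_homeo; have [_ [h10 _]] := h1_homeo; have [_ [h20 _]] := h2_homeo.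
split=> [[[[_ /bilipschitzP[r1 [a1 [b1 h1_bilip]]]] h1_SSP]
          [[_ /bilipschitzP[r2 [a2 [b2 h2_bilip]]]] h2_SSP]]|].
  have h_bilip := bilip_germ_prod h1_bilip h2_bilip.
  split; first split; first exact: homeo_germ_prod.
    by apply/bilipschitzP; do 3 eexists; exact: h_bilip.
  apply/(SSP_mapP (bilip_germ_lip h_bilip))/radial_cauchy_prod.
  by split; [apply/(SSP_mapP (bilip_germ_lip h1_bilip)) |
              apply/(SSP_mapP (bilip_germ_lip h2_bilip))].
move=> [[_ /bilipschitzP[r [a [b h_bilip]]]] h_SSP].
have h1_bilip := bilip_germ_prodl h20 h_bilip; have h2_bilip := bilip_germ_prodr h10 h_bilip.
have /radial_cauchy_prod[h1_rc h2_rc] := (SSP_mapP (bilip_germ_lip h_bilip)).1 h_SSP.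
split; split.
- by split=> //; apply/bilipschitzP; exists r, a, b.
- exact/(SSP_mapP (bilip_germ_lip h1_bilip)).
- by split=> //; apply/bilipschitzP; exists r, a, b.
- exact/(SSP_mapP (bilip_germ_lip h2_bilip)).
Qed.

Theorem proposition4p13 (R : realType) :
  (forall (n1 n2 : nat) (h1 : 'rV[R]_n1 -> 'rV[R]_n1)
          (h2 : 'rV[R]_n2 -> 'rV[R]_n2),
      homeo_germ h1 -> homeo_germ h2 ->
      (SSP_bilip_homeo h1 /\ SSP_bilip_homeo h2 <->
       SSP_bilip_homeo (prod_map h1 h2)))
  /\
  (forall (n : nat) (h hinv : 'rV[R]_n -> 'rV[R]_n),
      bilip_homeo h -> homeo_germ_inv h hinv ->
      (semiline_SSP (prod_map (@id 'rV[R]_n) h) <-> SSP_map (prod_map (@id 'rV[R]_n) h)) /\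
      (semiline_SSP (prod_map (@id 'rV[R]_n) hinv) <-> SSP_map (prod_map (@id 'rV[R]_n) h)))
  /\
  (forall (n : nat) (h hinv : 'rV[R]_n -> 'rV[R]_n),
      bilip_homeo h -> homeo_germ_inv h hinv ->
      (SSP_map h <-> semiline_SSP (prod_map (@id 'rV[R]_n) h)) /\
      (SSP_map h <-> semiline_SSP (prod_map (@id 'rV[R]_n) hinv))).
Proof.
split; first exact: SSP_bilip_homeo_prodP.
split=> n h hinv [_ /bilipschitzP[r [K1 [K2 h_bilip]]]] h_inv;
  have [r' [K1' [K2' [hinv_bilip h_hinv]]]] := radial_cauchy_homeo_inv h_bilip h_inv;
  rewrite (semiline_SSP_prod_idP h_bilip) (semiline_SSP_prod_idP hinv_bilip) -h_hinv.
  by rewrite (SSP_map_prod_idP h_bilip).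
by rewrite (SSP_mapP (bilip_germ_lip h_bilip)).
Qed.
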